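(* Let $X=[0,1]$, let $\Gamma$ be the group of orientation-preserving self-homeomorphisms of $[0,1]$ acting by application, and let $I$ be the ideal generated by the countable closed subsets of $[0,1]$ (i.e. subsets of countable closed sets). Then $\Gamma\curvearrowright X, I$ is $\sigma$-complete.
   Context: For a group $\Gamma$ acting on $X$, an invariant ideal $I$ on $X$ and $a\subseteq X$, $\mathrm{pstab}(a)=\{\gamma\in\Gamma:\gamma\cdot x=x\ \forall x\in a\}$ and $\gamma\cdot b=\{\gamma\cdot x:x\in b\}$. The dynamical ideal is $\sigma$-complete if for every $a\in I$ and every sequence $\langle b_n:n\in\omega\rangle$ of sets in $I$ there are $\gamma_n\in\mathrm{pstab}(a)$ with $\bigcup_n\gamma_n\cdot b_n\in I$. *)

From HB Require Import structures.
From mathcomp Require Import all_boot all_order all_algebra.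
From mathcomp Require Import all_classical all_reals all_analysis.
Set Implicit Arguments. Unset Strict Implicit. Unset Printing Implicit Defensive.
Import Order.TTheory GRing.Theory Num.Theory.
Import numFieldNormedType.Exports.
Local Open Scope classical_set_scope.
Local Open Scope ring_scope.

Definition I01 {R : realType} : set R := [set x | 0 <= x <= 1].

Definition homeo01 {R : realType} (g : R -> R) : Prop :=
  exists h : R -> R,
    set_fun I01 I01 g /\ set_fun I01 I01 h /\
    (forall x, I01 x -> h (g x) = x) /\ (forall x, I01 x -> g (h x) = x) /\
    {within I01, continuous g} /\ {within I01, continuous h}.

Definition orient_pres {R : realType} (g : R -> R) : Prop :=
  forall x y, I01 x -> I01 y -> x <= y -> g x <= g y.

Definition Gamma {R : realType} (g : R -> R) : Prop := homeo01 g /\ orient_pres g.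

Definition idealI {R : realType} (a : set R) : Prop :=
  exists C : set R, [/\ C `<=` I01, closed C, countable C & a `<=` C].

Definition pstab {R : realType} (a : set R) (g : R -> R) : Prop :=
  Gamma g /\ forall x, a x -> g x = x.

Definition sigma_complete (R : realType) : Prop :=
  forall a : set R, a `<=` I01 -> idealI a ->
  forall b : nat -> set R, (forall n, b n `<=` I01 /\ idealI (b n)) ->
  exists g : nat -> R -> R, (forall n, pstab a (g n)) /\
    idealI (\bigcup_n (g n @` b n)).

From mathcomp Require Import all_boot all_order all_algebra.
From mathcomp Require Import all_classical all_reals all_analysis.
From mathcomp Require Import lra.
Set Implicit Arguments. Unset Strict Implicit. Unset Printing Implicit Defensive.
Import Order.TTheory GRing.Theory Num.Theory.
Import numFieldNormedType.Exports.
Local Open Scope classical_set_scope.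
Local Open Scope ring_scope.

(* Enlarge [a] to a countable closed set K containing 0 and 1, and each b_n to a
   countable closed set C_n. Inside every gap (l, r) of K, the countable set C_n
   misses an interval; squeezing it gives a homeomorphism g_n fixing K that pushes
   C_n into the margins of width (r - l)/(n + 3) at the two ends of each gap. The
   union D of K and of all g_n(C_n) is countable, and it is closed: near a point
   of a gap only the finitely many compact sets g_n(C_n) whose margin exceeds the
   distance to the ends of the gap can meet D. *)

Section PiecewiseAffine.
Variable R : realType.
Implicit Types (f g : R -> R) (a c d p q s : R).

Definition glue p f g y := if y <= p then f y else g y.

Definition affine a c s y := c + s * (y - a).

(* The affine segment from [(p, c)] to [(q, f q)], continued by [f] after [q]. *)
Definition affine_to p c q f := glue q (affine p c ((f q - c) / (q - p))) f.

Lemma glue_homo p f g :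
  {homo f : x y / x < y} -> {homo g : x y / x < y} -> f p = g p ->
  {homo glue p f g : x y / x < y}.
Proof.
move=> hf hg fg x y xy; rewrite /glue.
case: (lerP x p) => xp; case: (lerP y p) => yp.
- exact: hf.
- by apply: le_lt_trans (hg _ _ yp); rewrite -fg (le_mono hf).
- by move: xp; rewrite ltNge (le_trans (ltW xy) yp).
- exact: hg.
Qed.

Lemma glue_surj p f g :
  {homo f : x y / x < y} -> {homo g : x y / x < y} -> f p = g p ->
  set_surj setT setT f -> set_surj setT setT g -> set_surj setT setT (glue p f g).
Proof.
move=> hf hg fg sf sg z _; case: (lerP z (f p)) => zp.
- have [y _ fy] := sf z I; exists y => //.
  by rewrite /glue -(le_mono hf) fy zp.
- have [y _ gy] := sg z I; exists y => //.
  by rewrite /glue leNgt -(leW_mono (le_mono hg)) gy -fg zp.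
Qed.

Lemma affine_homo a c s : 0 < s -> {homo affine a c s : x y / x < y}.
Proof. by move=> s_gt0 x y xy; rewrite /affine ltrD2l ltr_pM2l // ltrD2r. Qed.

Lemma affine_surj a c s : 0 < s -> set_surj setT setT (affine a c s).
Proof.
move=> s_gt0 z _; exists (a + (z - c) / s) => //.
by rewrite /affine addrAC subrr add0r mulrC divfK ?gt_eqF // addrC subrK.
Qed.

Lemma affine_to_at p c q f : p <= q -> affine_to p c q f p = c.
Proof. by move=> pq; rewrite /affine_to /glue pq /affine subrr mulr0 addr0. Qed.

Lemma affine_end p c q d : p < q -> affine p c ((d - c) / (q - p)) q = d.
Proof. by move=> pq; rewrite /affine divfK ?subr_eq0 ?gt_eqF // addrC subrK. Qed.

Lemma affine_to_rest p c q f y : p < q -> q <= y -> affine_to p c q f y = f y.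
Proof.
move=> pq qy; rewrite /affine_to /glue; case: ifP => // yq.
have -> : y = q by apply/eqP; rewrite eq_le yq.
exact: affine_end.
Qed.

Lemma affine_to_slope_gt0 p c q f : p < q -> c < f q -> 0 < (f q - c) / (q - p).
Proof. by move=> pq cfq; rewrite divr_gt0 // subr_gt0. Qed.

Lemma affine_to_homo p c q f : p < q -> c < f q ->
  {homo f : x y / x < y} -> {homo affine_to p c q f : x y / x < y}.
Proof.
move=> pq cfq hf; apply: glue_homo => //; first exact/affine_homo/affine_to_slope_gt0.
exact: affine_end.
Qed.

Lemma affine_to_surj p c q f : p < q -> c < f q ->
  {homo f : x y / x < y} -> set_surj setT setT f ->
  set_surj setT setT (affine_to p c q f).
Proof.
move=> pq cfq hf sf; have s_gt0 := affine_to_slope_gt0 pq cfq.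
by apply: glue_surj => //; [exact: affine_homo|exact: affine_end|exact: affine_surj].
Qed.

End PiecewiseAffine.

(* Fixes everything outside [(l, r)] and maps [u, v] affinely onto [l + e, r - e]. *)
Definition squeeze (R : realType) (l u v r e : R) : R -> R :=
  glue l id (affine_to l l u (affine_to u (l + e) v (affine_to v (r - e) r id))).

Section Squeeze.
Variables (R : realType) (l u v r e : R).
Hypotheses (lu : l < u) (uv : u < v) (vr : v < r) (e_gt0 : 0 < e)
  (margins : l + e < r - e).

Let f3 := affine_to v (r - e) r id.
Let f2 := affine_to u (l + e) v f3.
Let f1 := affine_to l l u f2.

Let f3v : f3 v = r - e. Proof. exact/affine_to_at/ltW. Qed.
Let f2u : f2 u = l + e. Proof. exact/affine_to_at/ltW. Qed.
Let f1l : f1 l = l. Proof. exact/affine_to_at/ltW. Qed.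
Let f1u : f1 u = l + e. Proof. by rewrite /f1 affine_to_rest. Qed.

Let f3_homo : {homo f3 : x y / x < y}.
Proof. by apply: affine_to_homo => //; rewrite gtrBl. Qed.
Let f2_homo : {homo f2 : x y / x < y}.
Proof. by apply: affine_to_homo => //; rewrite f3v. Qed.
Let f1_homo : {homo f1 : x y / x < y}.
Proof. by apply: affine_to_homo => //; rewrite f2u ltrDl. Qed.

Lemma squeeze_homo : {homo squeeze l u v r e : x y / x < y}.
Proof. exact: glue_homo. Qed.

Lemma squeeze_surj : set_surj setT setT (squeeze l u v r e).
Proof.
have f3_surj : set_surj setT setT f3.
  by apply: affine_to_surj => //; rewrite gtrBl.
have f2_surj : set_surj setT setT f2 by apply: affine_to_surj => //; rewrite -/f3 f3v.
have f1_surj : set_surj setT setT f1 by apply: affine_to_surj => //; rewrite -/f2 f2u ltrDl.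
by apply: glue_surj => // z _; exists z.
Qed.

Lemma squeeze_left y : y <= l -> squeeze l u v r e y = y.
Proof. by move=> yl; rewrite /squeeze /glue yl. Qed.

Lemma squeeze_right y : r <= y -> squeeze l u v r e y = y.
Proof.
move=> ry; have vy := ltW (lt_le_trans vr ry); have uy := le_trans (ltW uv) vy.
rewrite /squeeze /glue leNgt (lt_le_trans lu uy) /=.
by rewrite affine_to_rest // affine_to_rest // affine_to_rest.
Qed.

Lemma squeeze_le y : y <= u -> squeeze l u v r e y <= l + e.
Proof.
move=> yu; have <- : squeeze l u v r e u = l + e.
  by rewrite /squeeze /glue leNgt lu.
by rewrite (le_mono squeeze_homo).
Qed.

Lemma squeeze_ge y : v <= y -> r - e <= squeeze l u v r e y.
Proof.
move=> vy; have <- : squeeze l u v r e v = r - e.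
  rewrite /squeeze /glue leNgt (lt_trans lu uv) /= affine_to_rest ?(ltW uv) //.
  by rewrite affine_to_rest // -/f3 f3v.
by rewrite (le_mono squeeze_homo).
Qed.

End Squeeze.

Lemma exists_notin_countable (R : realType) (C : set R) (l r : R) :
  l < r -> countable C -> exists2 m, l < m < r & ~ C m.
Proof.
move=> lr cC; apply: contrapT => noC.
have itvC : `]l, r[ `<=` C.
  move=> y; rewrite /= in_itv /= => lyr; apply: contrapT => nCy.
  by apply: noC; exists y.
have := countable_lebesgue_measure0 (sub_countable (subset_card_le itvC) cC).
rewrite lebesgue_measure_itv /= lte_fin lr => /eqP.
by rewrite -EFinD eqe subr_eq0 gt_eqF.
Qed.

(* A countable closed set misses an interval around some point of [(l, r)];
   squeezing that interval pushes the whole set within [e] of [l] or [r]. *)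
Lemma squeeze_avoiding (R : realType) (C : set R) (l r e : R) :
  closed C -> countable C -> 0 < e -> l + e < r - e ->
  exists psi : R -> R, [/\ {homo psi : x y / x < y}, set_surj setT setT psi,
    (forall y, y <= l -> psi y = y), (forall y, r <= y -> psi y = y)
  & forall y, C y -> psi y <= l + e \/ r - e <= psi y].
Proof.
move=> clC cC e_gt0 margins.
have lr : l < r by lra.
have [m /andP[lm mr] nCm] := exists_notin_countable lr cC.
have [d d_gt0 ballC] : exists2 d, 0 < d & forall y, `|m - y| < d -> ~ C y.
  have : nbhs m (~` C) by apply: open_nbhs_nbhs; split => //; exact: closed_openC.
  by move/nbhs_ballP => [d d_gt0 mdC]; exists d => // y my; apply: mdC; rewrite -ball_normE.
pose w := Num.min (d / 2) (Num.min ((m - l) / 2) ((r - m) / 2)).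
have w_gt0 : 0 < w by rewrite !lt_min !divr_gt0 ?subr_gt0.
have wd : w <= d / 2 by rewrite ge_min lexx.
have wl : w <= (m - l) / 2 by rewrite !ge_min lexx orbT.
have wr : w <= (r - m) / 2 by rewrite !ge_min lexx !orbT.
have lu : l < m - w by lra.
have uv : m - w < m + w by lra.
have vr : m + w < r by lra.
exists (squeeze l (m - w) (m + w) r e); split.
- exact: squeeze_homo.
- exact: squeeze_surj.
- exact: squeeze_left.
- exact: squeeze_right.
- move=> y Cy; case: (lerP y (m - w)) => yu; first by left; apply: squeeze_le.
  case: (lerP (m + w) y) => yv; first by right; apply: squeeze_ge.
  by exfalso; apply: (ballC y) => //; rewrite ltr_norml; apply/andP; split; lra.
Qed.

Section Gaps.
Variable R : realType.
Implicit Types (K A : set R) (k l r x y z : R).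

Lemma closed_sup_mem K A :
  closed K -> A `<=` K -> A !=set0 -> has_ubound A -> K (sup A).
Proof.
move=> clK AK A0 ubA; rewrite ((closure_id K).1 clK).
exact/(closure_subset AK)/closure_sup.
Qed.

Lemma closed_inf_mem K A :
  closed K -> A `<=` K -> A !=set0 -> has_lbound A -> K (inf A).
Proof.
move=> clK AK [a Aa] [b lbA].
have clNK : closed [set y | K (- y)].
  exact: (continuous_closedP (-%R : R -> R)).1 (@oppr_continuous _ R^o) K clK.
apply: (closed_sup_mem clNK).
- by move=> _ [y Ay <-]; rewrite /= opprK; exact: AK.
- by exists (- a), a.
- by exists (- b) => _ [y Ay <-]; rewrite lerN2; exact: lbA.
Qed.

Definition gap_left K x := sup [set k | K k /\ k <= x].
Definition gap_right K x := inf [set k | K k /\ x <= k].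

Definition gap K l r := [/\ K l, K r & forall z, l < z < r -> ~ K z].

Lemma gap_left_ge K k y : K k -> k <= y -> k <= gap_left K y.
Proof. by move=> Kk ky; apply: ub_le_sup => //; exists y => z []. Qed.

Lemma gap_right_le K k y : K k -> y <= k -> gap_right K y <= k.
Proof. by move=> Kk ky; apply: ge_inf => //; exists y => z []. Qed.

Lemma gap_of K a b x : closed K -> K a -> K b -> a <= x <= b -> ~ K x ->
  gap K (gap_left K x) (gap_right K x) /\ gap_left K x < x < gap_right K x.
Proof.
move=> clK Ka Kb /andP[ax xb] nKx.
have ubL : has_ubound [set k | K k /\ k <= x] by exists x => k [].
have lbR : has_lbound [set k | K k /\ x <= k] by exists x => k [].
have KL : K (gap_left K x) by apply: closed_sup_mem => // [k []//|]; exists a.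
have KR : K (gap_right K x) by apply: closed_inf_mem => // [k []//|]; exists b.
have Lx : gap_left K x < x.
  rewrite lt_neqAle ge_sup ?andbT; [|by exists a|by move=> k []].
  by apply/eqP => Lx; apply: nKx; rewrite -Lx.
have xR : x < gap_right K x.
  rewrite lt_neqAle lb_le_inf ?andbT; [|by exists b|by move=> k []].
  by apply/eqP => xR; apply: nKx; rewrite xR.
split; last by rewrite Lx xR.
split => // z /andP[Lz zR] Kz; case: (lerP z x) => zx.
  by move: Lz; rewrite ltNge gap_left_ge.
by move: zR; rewrite ltNge gap_right_le // ltW.
Qed.

Lemma gap_ends K l r x : gap K l r -> l < x < r ->
  gap_left K x = l /\ gap_right K x = r.
Proof.
move=> [Kl Kr noK] /andP[lx xr].
split; apply/eqP; rewrite eq_le; apply/andP; split.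
- apply: ge_sup; first by exists l; split => //; exact: ltW.
  move=> k [Kk kx]; rewrite leNgt; apply/negP => lk.
  by apply: (noK k) => //; rewrite lk (le_lt_trans kx xr).
- exact/gap_left_ge/ltW.
- exact/gap_right_le/ltW.
- apply: lb_le_inf; first by exists r; split => //; exact: ltW.
  move=> k [Kk xk]; rewrite leNgt; apply/negP => kr.
  by apply: (noK k) => //; rewrite kr (lt_le_trans lx xk).
Qed.

End Gaps.

Section GammaCriterion.
Variable R : realType.
Implicit Types f : R -> R.

Lemma I01E : (I01 : set R) = `[0, 1]%classic.
Proof. by rewrite set_itvcc. Qed.

Lemma I01_0 : I01 (0 : R). Proof. by rewrite /I01 /= lexx ler01. Qed.
Lemma I01_1 : I01 (1 : R). Proof. by rewrite /I01 /= lexx ler01. Qed.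

Lemma incr_onto_continuous f :
  {in I01 &, {homo f : x y / x < y}} -> set_fun I01 I01 f -> set_surj I01 I01 f ->
  {within I01, continuous f}.
Proof.
move=> /le_mono_in f_mono f01 f_onto.
have f0 : f 0 = 0.
  have [x Ix fx] := f_onto 0 I01_0.
  apply/le_anti; rewrite (andP (f01 _ I01_0)).1 andbT -[X in _ <= X]fx.
  by rewrite f_mono ?inE //; [case/andP: Ix|exact: I01_0].
have f1 : f 1 = 1.
  have [x Ix fx] := f_onto 1 I01_1.
  apply/le_anti; rewrite (andP (f01 _ I01_1)).2 /= -[X in X <= _]fx.
  by rewrite f_mono ?inE //; [case/andP: Ix|exact: I01_1].
rewrite I01E; apply: segment_inc_surj_continuous; last by rewrite f0 f1 -I01E.
by move=> x y; rewrite !in_itv /= => Ix Iy; apply: f_mono; rewrite inE.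
Qed.

Lemma Gamma_incr_onto f :
  {in I01 &, {homo f : x y / x < y}} -> set_fun I01 I01 f -> set_surj I01 I01 f ->
  Gamma f.
Proof.
move=> f_homo f01 f_onto; have f_mono := le_mono_in f_homo.
have f_inj := inc_inj_in f_mono.
have [h hK] : {h : R -> R & forall y, I01 y -> I01 (h y) /\ f (h y) = y}.
  apply: (@choice _ _ (fun y x => I01 y -> I01 x /\ f x = y)) => y.
  have [Iy|] := pselect (I01 y); last by exists 0.
  by have [x Ix fx] := f_onto y Iy; exists x.
have h01 : set_fun I01 I01 h by move=> y /hK[].
have fK : forall x, I01 x -> h (f x) = x.
  move=> x Ix; have [Ihfx fhfx] := hK _ (f01 _ Ix).
  by apply: f_inj; rewrite ?inE.
have h_homo : {in I01 &, {homo h : x y / x < y}}.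
  move=> x y /[!inE] Ix Iy xy.
  have [Ihx fhx] := hK x Ix; have [Ihy fhy] := hK y Iy.
  by rewrite -(leW_mono_in f_mono) ?inE // fhx fhy.
have h_onto : set_surj I01 I01 h by move=> x Ix; exists (f x); [exact: f01|exact: fK].
split; last by move=> x y Ix Iy; rewrite f_mono ?inE.
exists h; do !split => //; first by move=> y /hK[].
- exact: incr_onto_continuous.
- exact: incr_onto_continuous.
Qed.

End GammaCriterion.

Section Gapwise.
Variables (R : realType) (K : set R) (P : R -> R -> R -> R).
Hypotheses (clK : closed K) (KI : K `<=` I01) (K0 : K 0) (K1 : K 1).
Hypothesis P_homo : forall l r, l < r -> {homo P l r : x y / x < y}.
Hypothesis P_surj : forall l r, l < r -> set_surj setT setT (P l r).
Hypothesis P_left : forall l r y, l < r -> y <= l -> P l r y = y.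
Hypothesis P_right : forall l r y, l < r -> r <= y -> P l r y = y.

Definition gapwise x :=
  if pselect (I01 x /\ ~ K x) then P (gap_left K x) (gap_right K x) x else x.

Let gap_ofK x : I01 x -> ~ K x ->
  gap K (gap_left K x) (gap_right K x) /\ gap_left K x < x < gap_right K x.
Proof. exact: gap_of. Qed.

Let P_in l r x : l < x < r -> l < P l r x < r.
Proof.
case/andP=> lx xr; have lr := lt_trans lx xr.
rewrite -{1}(P_left lr (lexx l)) -{4}(P_right lr (lexx r)).
by rewrite !(leW_mono (le_mono (P_homo lr))) lx.
Qed.

Lemma gapwise_fix x : K x -> gapwise x = x.
Proof. by rewrite /gapwise => Kx; case: pselect => // -[]. Qed.

Lemma gapwise_gap x : I01 x -> ~ K x ->
  gapwise x = P (gap_left K x) (gap_right K x) x.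
Proof. by rewrite /gapwise => Ix nKx; case: pselect => // -[]. Qed.

Lemma gapwise_in_gap x : I01 x -> ~ K x ->
  gap_left K x < gapwise x < gap_right K x.
Proof. by move=> Ix nKx; rewrite gapwise_gap //; apply: P_in; case: (gap_ofK Ix nKx). Qed.

Lemma gapwise_same_gap x : I01 x -> ~ K x ->
  gap_left K (gapwise x) = gap_left K x /\ gap_right K (gapwise x) = gap_right K x.
Proof.
by move=> Ix nKx; apply: gap_ends (gapwise_in_gap Ix nKx); case: (gap_ofK Ix nKx).
Qed.

Lemma gapwise01 : set_fun I01 I01 gapwise.
Proof.
move=> x Ix; have [Kx|nKx] := pselect (K x); first by rewrite gapwise_fix.
have [[/KI/andP[l0 _] /KI/andP[_ r1] _] _] := gap_ofK Ix nKx.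
case/andP: (gapwise_in_gap Ix nKx) => lg gr.
by rewrite /I01 /= (le_trans l0 (ltW lg)) (le_trans (ltW gr) r1).
Qed.

Lemma gapwise_homo : {in I01 &, {homo gapwise : x y / x < y}}.
Proof.
move=> x y /[!inE] Ix Iy xy.
have [Kx|nKx] := pselect (K x); have [Ky|nKy] := pselect (K y).
- by rewrite !gapwise_fix.
- rewrite gapwise_fix //; apply: le_lt_trans (gap_left_ge Kx (ltW xy)) _.
  by case/andP: (gapwise_in_gap Iy nKy).
- rewrite (gapwise_fix Ky); apply: lt_le_trans (gap_right_le Ky (ltW xy)).
  by case/andP: (gapwise_in_gap Ix nKx).
have [gapx /andP[lx xr]] := gap_ofK Ix nKx.
case: (ltP y (gap_right K x)) => [yr|ry].
- have xyr : gap_left K x < y < gap_right K x by rewrite (lt_trans lx xy) yr.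
  rewrite !gapwise_gap //; have [-> ->] := gap_ends gapx xyr.
  by apply: P_homo => //; exact: lt_trans lx xr.
- apply: (@lt_le_trans _ _ (gap_right K x)); first by case/andP: (gapwise_in_gap Ix nKx).
  have [_ Kr _] := gapx; apply: (le_trans (gap_left_ge Kr ry)).
  by apply: ltW; case/andP: (gapwise_in_gap Iy nKy).
Qed.

Lemma gapwise_onto : set_surj I01 I01 gapwise.
Proof.
move=> y Iy; have [Ky|nKy] := pselect (K y); first by exists y; rewrite ?gapwise_fix.
have [gapy /andP[ly yr]] := gap_ofK Iy nKy; have lr := lt_trans ly yr.
have [x _ Pxy] := P_surj lr (I : setT y).
have lxr : gap_left K y < x < gap_right K y.
  have Pmono := leW_mono (le_mono (P_homo lr)).
  by rewrite -(Pmono (gap_left K y)) -(Pmono _ (gap_right K y)) Pxy P_left ?P_right ?ly.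
have [/KI Il /KI Ir _] := gapy.
have Ix : I01 x by move: Il Ir lxr; rewrite /I01 /=; lra.
have nKx : ~ K x by case: gapy => _ _; apply.
have [Lx Rx] := gap_ends gapy lxr.
by exists x => //; rewrite gapwise_gap // Lx Rx.
Qed.

Lemma gapwise_Gamma : Gamma gapwise.
Proof. exact: Gamma_incr_onto gapwise_homo gapwise01 gapwise_onto. Qed.

End Gapwise.

Definition near_gap_ends (R : realType) (K : set R) (e : R -> R -> R) (z : R) :=
  let l := gap_left K z in let r := gap_right K z in
  z <= l + e l r \/ r - e l r <= z.

Lemma exists_gap_squeezing (R : realType) (K C : set R) (e : R -> R -> R) :
  closed K -> K `<=` I01 -> K 0 -> K 1 -> closed C -> countable C ->
  (forall l r, l < r -> 0 < e l r /\ l + e l r < r - e l r) ->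
  exists g : R -> R, [/\ Gamma g, (forall x, K x -> g x = x) &
    forall y, C y -> I01 y -> ~ K (g y) -> near_gap_ends K e (g y)].
Proof.
move=> clK KI K0 K1 clC cC e_ok.
pose Q l r (psi : R -> R) := [/\ {homo psi : x y / x < y}, set_surj setT setT psi,
    (forall y, y <= l -> psi y = y), (forall y, r <= y -> psi y = y)
  & forall y, C y -> psi y <= l + e l r \/ r - e l r <= psi y].
have [F hF] : {F : R * R -> R -> R & forall lr, lr.1 < lr.2 -> Q lr.1 lr.2 (F lr)}.
  apply: (@choice _ _ (fun lr psi => lr.1 < lr.2 -> Q lr.1 lr.2 psi)) => -[l r] /=.
  have [lr|nlr] := pselect (l < r); last by exists id => /nlr.
  have [e_gt0 margins] := e_ok _ _ lr.
  by have [psi] := squeeze_avoiding clC cC e_gt0 margins; exists psi.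
pose P l r := F (l, r).
have P_homo l r : l < r -> {homo P l r : x y / x < y} by case/(hF (l, r)).
have P_surj l r : l < r -> set_surj setT setT (P l r) by case/(hF (l, r)).
have P_left l r y : l < r -> y <= l -> P l r y = y by case/(hF (l, r)) => _ _ + _ _; apply.
have P_right l r y : l < r -> r <= y -> P l r y = y by case/(hF (l, r)) => _ _ _ + _; apply.
exists (gapwise K P); split; [exact: gapwise_Gamma|exact: gapwise_fix|].
move=> y Cy Iy nKgy; have nKy : ~ K y by move=> Ky; apply: nKgy; rewrite gapwise_fix.
have [_ /andP[ly yr]] := gap_of clK K0 K1 Iy nKy.
rewrite /near_gap_ends; have [-> ->] := gapwise_same_gap clK K0 K1 P_homo P_left P_right Iy nKy.
by rewrite gapwise_gap //; case: (hF (_, _) (lt_trans ly yr)) => _ _ _ _; apply.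
Qed.

Section NearGapEndsUnion.
Variables (R : realType) (K : set R) (E : nat -> set R) (e : nat -> R -> R -> R).
Hypotheses (clK : closed K) (KI : K `<=` I01) (K0 : K 0) (K1 : K 1).
Hypotheses (clE : forall n, closed (E n)) (EI : forall n, E n `<=` I01).
Hypothesis e_small :
  forall l r d, 0 < d -> exists N, forall n, (N <= n)%N -> e n l r <= d.
Hypothesis E_near_ends : forall n z, E n z -> ~ K z -> near_gap_ends K (e n) z.

Let D := K `|` \bigcup_n E n.

Lemma near_gap_ends_union_in_gap l r d N z : gap K l r -> 0 < d ->
  (forall n, (N <= n)%N -> e n l r <= d) -> D z -> l + d < z < r - d ->
  (\bigcup_(n in `I_N) E n) z.
Proof.
move=> glr d_gt0 eN Dz /andP[lz zr].
have lzr : l < z < r by apply/andP; split; lra.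
have nKz : ~ K z by case: glr => _ _; apply.
case: Dz => [//|[n _ Enz]]; exists n => //=; rewrite ltnNge; apply/negP => Nn.
have := E_near_ends Enz nKz; rewrite /near_gap_ends; have [-> ->] := gap_ends glr lzr.
by have := eN n Nn; lra.
Qed.

Lemma closed_near_gap_ends_union : closed D.
Proof.
move=> x clx.
have Ix : I01 x.
  have clI : closed (I01 : set R) by rewrite I01E; exact: itv_closed.
  rewrite ((closure_id _).1 clI); apply: closure_subset clx.
  by move=> z [/KI|[n _ /EI]].
have [Kx|nKx] := pselect (K x); first by left.
have [glr /andP[lx xr]] := gap_of clK K0 K1 Ix nKx.
set l := gap_left K x in glr lx; set r := gap_right K x in glr xr.
pose d := Num.min (x - l) (r - x) / 2.
have d_gt0 : 0 < d by rewrite divr_gt0 // lt_min !subr_gt0 lx xr.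
have dl : d <= (x - l) / 2 by rewrite ler_pM2r // ge_min lexx.
have dr : d <= (r - x) / 2 by rewrite ler_pM2r // ge_min lexx orbT.
have [N eN] := e_small l r d_gt0.
have clF : closed (\bigcup_(n in `I_N) E n).
  by apply: closed_bigcup => //; exact: finite_II.
suff /clF[n _ Enx] : closure (\bigcup_(n in `I_N) E n) x by right; exists n.
move=> B Bx; have [z [Dz [Bz xz]]] := clx _ (filterI Bx (nbhsx_ballx x d d_gt0)).
move: xz; rewrite -ball_normE /ball_ /= ltr_norml => /andP[xz zx].
exists z; split => //; apply: near_gap_ends_union_in_gap glr d_gt0 eN Dz _.
by apply/andP; split; lra.
Qed.

End NearGapEndsUnion.

(* The shift by 3 keeps the two margins of a gap disjoint. *)
Definition gap_margin (R : realType) (n : nat) (l r : R) := (r - l) / n.+3%:R.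

Lemma gap_margin_ok (R : realType) (n : nat) (l r : R) : l < r ->
  0 < gap_margin n l r /\ l + gap_margin n l r < r - gap_margin n l r.
Proof.
move=> lr; rewrite /gap_margin; set m := _ / _.
have m_gt0 : 0 < m by rewrite divr_gt0 ?subr_gt0 ?ltr0n.
have rlm : r - l = m * n.+3%:R by rewrite divfK // pnatr_eq0.
have : m * 3 <= m * n.+3%:R by rewrite ler_pM2l // ler_nat.
by split => //; lra.
Qed.

Lemma gap_margin_small (R : realType) (l r d : R) : 0 < d ->
  exists N, forall n, (N <= n)%N -> gap_margin n l r <= d.
Proof.
move=> d_gt0; exists (Num.trunc ((r - l) / d)) => n Nn.
rewrite /gap_margin ler_pdivrMr ?ltr0n // [d * _]mulrC -ler_pdivrMr //.
apply/ltW/(lt_le_trans (truncnS_gt _)); by rewrite ler_nat ltnS; exact/leqW/leqW.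
Qed.

Lemma countable_setU T (A B : set T) :
  countable A -> countable B -> countable (A `|` B).
Proof.
move=> cA cB; have -> : A `|` B = \bigcup_(i in [set: bool]) (if i then A else B).
  by apply/seteqP; split=> x; [case=> ?; [exists true|exists false]|case=> -[] _ ?; [left|right]].
by apply: bigcup_countable; [exact: countableP|case].
Qed.

Lemma idealI_endpoints (R : realType) (a : set R) : idealI a ->
  exists K : set R, [/\ closed K, countable K, K `<=` I01, a `<=` K & K 0 /\ K 1].
Proof.
move=> [C [CI clC cC aC]]; have fin01 := @finite_set2 R 0 1.
exists (C `|` [set 0; 1]); split.
- apply: closedU => //; apply: (accessible_finite_set_closed.1 _ _ fin01).
  exact/hausdorff_accessible/(@norm_hausdorff _ R^o).
- exact/countable_setU/finite_set_countable.
- by move=> z [/CI //|[->|->]]; [exact: I01_0|exact: I01_1].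
- by move=> z /aC; left.
- by split; right; [left|right].
Qed.

Lemma Gamma_set_fun (R : realType) (g : R -> R) : Gamma g -> set_fun I01 I01 g.
Proof. by case=> -[h []]. Qed.

Lemma Gamma_image_closed (R : realType) (g : R -> R) (C : set R) :
  Gamma g -> C `<=` I01 -> closed C -> closed (g @` C).
Proof.
move=> [[h [_ [_ [_ [_ [g_cont _]]]]]] _] CI clC.
apply: compact_closed; first exact: (@norm_hausdorff _ R^o).
apply: continuous_compact; first exact: continuous_subspaceW CI g_cont.
by apply: subclosed_compact clC _ CI; rewrite I01E; exact: segment_compact.
Qed.

Theorem mainTheorem11 (R : realType) : sigma_complete R.
Proof.
move=> a _ /idealI_endpoints[K [clK cK KI aK [K0 K1]]] b bI.
have [C hC] := @choice _ _ (fun n (Cn : set R) =>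
  [/\ Cn `<=` I01, closed Cn, countable Cn & b n `<=` Cn]) (fun n => (bI n).2).
have [g hg] := @choice _ _ (fun n (gn : R -> R) =>
  [/\ Gamma gn, (forall x, K x -> gn x = x) & forall y, C n y -> I01 y ->
      ~ K (gn y) -> near_gap_ends K (gap_margin n) (gn y)])
  (fun n => let: And4 _ clC cC _ := hC n in
   exists_gap_squeezing clK KI K0 K1 clC cC (@gap_margin_ok R n)).
have gG n : Gamma (g n) by case: (hg n).
have CI n : C n `<=` I01 by case: (hC n).
exists g; split=> [n|]; first by split=> // x /aK; case: (hg n) => _ + _; apply.
exists (K `|` \bigcup_n g n @` C n); split.
- by move=> _ [/KI //|[n _ [y /CI Iy <-]]]; exact: Gamma_set_fun.
- apply: closed_near_gap_ends_union => //.
  + by move=> n; apply: Gamma_image_closed => //; case: (hC n).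
  + by move=> n _ [y /CI Iy <-]; exact: Gamma_set_fun.
  + exact: gap_margin_small.
  + by move=> n _ [y Cy <-] nK; case: (hg n) => _ _; apply => //; exact: CI Cy.
- apply: countable_setU => //; apply: bigcup_countable => [|n _]; first exact: countableP.
  by apply: sub_countable (card_image_le _ _) _; case: (hC n).
- move=> _ [n _ [y bny <-]]; right; exists n => //; exists y => //.
  by case: (hC n) => _ _ _; apply.
Qed.
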